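(* Let $(H,m,u,\Delta,\varepsilon,\omega)$ be a dual quasi-bialgebra over a field $\Bbbk$, and let $F:{}^{H}\mathfrak{M}\to {}^{H}\mathfrak{M}^{H}_{H}$ and $G:{}^{H}\mathfrak{M}^{H}_{H}\to {}^{H}\mathfrak{M}$ be the adjoint pair described in the context. The following assertions are equivalent. (i) The adjunction $(F,G)$ is an equivalence of categories. (ii) For each $M\in {}^{H}\mathfrak{M}^{H}_{H}$ there exists a $\Bbbk$-linear map $\tau:M\to M^{coH}$ such that $$\tau(mh)=\omega^{-1}[\tau(m_0)_{-1}\otimes m_1\otimes h]\,\tau(m_0)_0\quad\text{for all }h\in H,\ m\in M,$$ $$m_{-1}\otimes \tau(m_0)=\tau(m_0)_{-1}m_1\otimes \tau(m_0)_0\quad\text{for all }m\in M,$$ $$\tau(m_0)m_1=m\quad\text{for all }m\in M.$$ (iii) For each $M\in {}^{H}\mathfrak{M}^{H}_{H}$ there exists a $\Bbbk$-linear map $\tau:M\to M^{coH}$ such that $\tau(m_0)m_1=m$ for all $m\in M$ and $$\tau(mh)=m\,\varepsilon(h)\quad\text{for all }h\in H,\ m\in M^{coH}.$$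
   Context: A dual quasi-bialgebra is a datum $(H,m,u,\Delta,\varepsilon,\omega)$ where $(H,\Delta,\varepsilon)$ is a coassociative counital coalgebra over $\Bbbk$; $m:H\otimes H\to H$, $hk:=m(h\otimes k)$, and $u:\Bbbk\to H$, $1_H:=u(1)$, are coalgebra maps with $1_Hh=h=h1_H$; and $\omega:H\otimes H\otimes H\to\Bbbk$ (the reassociator) is convolution invertible with inverse $\omega^{-1}$, satisfies $\omega(h\otimes k\otimes l)=\varepsilon(h)\varepsilon(k)\varepsilon(l)$ whenever $1_H\in\{h,k,l\}$, the 3-cocycle condition $\omega(h_1\otimes k_1\otimes l_1m_1)\omega(h_2k_2\otimes l_2\otimes m_2)=\omega(k_1\otimes l_1\otimes m_1)\omega(h_1\otimes k_2l_2\otimes m_2)\omega(h_2\otimes k_3\otimes l_3)$, and quasi-associativity $h_1(k_1l_1)\omega(h_2\otimes k_2\otimes l_2)=\omega(h_1\otimes k_1\otimes l_1)(h_2k_2)l_2$ (Sweedler notation $\Delta(h)=h_1\otimes h_2$, summation understood). For a left $H$-comodule we write $\rho^l(m)=m_{-1}\otimes m_0$, for a right $H$-comodule $\rho^r(m)=m_0\otimes m_1$. ${}^{H}\mathfrak{M}$ is the category of left $H$-comodules. ${}^{H}\mathfrak{M}^{H}_{H}$ (right dual quasi-Hopf $H$-bicomodules) is the category whose objects are $H$-bicomodules $M$ (commuting left and right coactions; write $m_{-1}\otimes m_0\otimes m_1$) endowed with a linear map $M\otimes H\to M$, $m\otimes h\mapsto mh$, which is a bicomodule map when $M\otimes H$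 carries the codiagonal coactions $m\otimes h\mapsto m_{-1}h_1\otimes(m_0\otimes h_2)$ and $m\otimes h\mapsto (m_0\otimes h_1)\otimes m_1h_2$, and satisfies $m1_H=m$ and $(mh)l=\omega^{-1}(m_{-1}\otimes h_1\otimes l_1)\,m_0(h_2l_2)\,\omega(m_1\otimes h_3\otimes l_3)$; morphisms are bicolinear maps preserving the action. For $M$ a right comodule, $M^{coH}=\{m\in M: m_0\otimes m_1=m\otimes 1_H\}$; for $M\in{}^{H}\mathfrak{M}^{H}_{H}$, $M^{coH}$ is a left subcomodule. $G:{}^{H}\mathfrak{M}^{H}_{H}\to{}^{H}\mathfrak{M}$ is $G(M)=M^{coH}$. $F:{}^{H}\mathfrak{M}\to{}^{H}\mathfrak{M}^{H}_{H}$ is $F(V)=V\otimes H$ with $\rho^l(v\otimes h)=v_{-1}h_1\otimes(v_0\otimes h_2)$, $\rho^r(v\otimes h)=(v\otimes h_1)\otimes h_2$, $(v\otimes h)l=\omega^{-1}(v_{-1}\otimes h_1\otimes l_1)v_0\otimes h_2l_2$. $F$ is left adjoint to $G$, with counit $\epsilon_M:M^{coH}\otimes H\to M$, $x\otimes h\mapsto xh$, and unit $\eta_N:N\to (N\otimes H)^{coH}$, $n\mapsto n\otimes 1_H$. *)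

(* MathComp has no tensor products, so we construct the tensor product of
   vector spaces V (x) W over a field k as the quotient of formal sums
   sum c_i (v_i, w_i) by the relation "same value under every bilinear map
   into every k-vector space"; this is the usual tensor product (it has the
   universal property: tl b is well defined for every bilinear b, and the pure
   tensors tm v w span).  Linear maps out of tensor products are written via
   their associated multilinear maps (tl), exactly as Sweedler notation does. *)
From HB Require Import structures.
From mathcomp Require Import all_boot all_algebra.
From mathcomp Require Import boolp.
Set Implicit Arguments. Unset Strict Implicit. Unset Printing Implicit Defensive.
Import GRing.Theory.
Local Open Scope ring_scope.
Local Open Scope quotient_scope.

Section Lin.
Variable k : fieldType.
Definition lin (V W : lmodType k) (f : V -> W) :=
  forall (a : k) (x y : V), f (a *: x + y) = a *: f x + f y.
Definition bilin (V W U : lmodType k) (b : V -> W -> U) :=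
  (forall w, lin (fun v => b v w)) /\ (forall v, lin (b v)).
End Lin.

Section Tensor.
Variables (k : fieldType) (V W : lmodType k).
Definition fsum := seq (k * (V * W))%type.
Definition tsum (U : lmodType k) (b : V -> W -> U) (s : fsum) : U :=
  \sum_(x <- s) x.1 *: b x.2.1 x.2.2.
Definition teq (s t : fsum) : Prop :=
  forall (U : lmodType k) (b : V -> W -> U), bilin b -> tsum b s = tsum b t.
Definition teqb : rel fsum := fun s t => `[< teq s t >].
Lemma teqb_refl : reflexive teqb. Proof. by move=> s; apply/asboolP. Qed.
Lemma teqb_sym : symmetric teqb.
Proof. by move=> s t; apply/asboolP/asboolP => h U b hb; rewrite h. Qed.
Lemma teqb_trans : transitive teqb.
Proof. by move=> t s u /asboolP h1 /asboolP h2; apply/asboolP=> U b hb; rewrite h1 ?h2. Qed.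
Canonical teqb_equiv := EquivRel teqb teqb_refl teqb_sym teqb_trans.
Definition tensor := {eq_quot teqb_equiv}.
HB.instance Definition _ := Choice.on tensor.
Definition tl (U : lmodType k) (b : V -> W -> U) (x : tensor) : U := tsum b (repr x).
Definition tmk (s : fsum) : tensor := \pi_tensor s.
Lemma teq_repr (s : fsum) : teq (repr (tmk s)) s.
Proof.
have /asboolP // : teqb (repr (tmk s)) s.
by apply/(@eqquotP _ _ tensor); rewrite reprK.
Qed.
Lemma tl_pi (U : lmodType k) (b : V -> W -> U) s : bilin b -> tl b (tmk s) = tsum b s.
Proof. by move=> hb; rewrite /tl (teq_repr s hb). Qed.
Lemma tensor_ext (x y : tensor) :
  (forall (U : lmodType k) (b : V -> W -> U), bilin b -> tl b x = tl b y) -> x = y.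
Proof.
move=> h; rewrite -[x]reprK -[y]reprK; apply/(@eqquotP _ _ tensor); apply/asboolP => U b hb.
exact: h.
Qed.
Definition tadd (x y : tensor) : tensor := tmk (repr x ++ repr y).
Definition tzero : tensor := tmk [::].
Definition tscale (c : k) (x : tensor) : tensor :=
  tmk (map (fun z => (c * z.1, z.2)) (repr x)).
Definition topp (x : tensor) : tensor := tscale (-1) x.
Lemma tsum_cat (U : lmodType k) (b : V -> W -> U) s t : tsum b (s ++ t) = tsum b s + tsum b t.
Proof. by rewrite /tsum big_cat. Qed.
Lemma tsum_scale (U : lmodType k) (b : V -> W -> U) c s :
  tsum b (map (fun z => (c * z.1, z.2)) s) = c *: tsum b s.
Proof. by rewrite /tsum big_map scaler_sumr; apply: eq_bigr => z _; rewrite scalerA. Qed.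
Lemma tl_add (U : lmodType k) (b : V -> W -> U) x y : bilin b -> tl b (tadd x y) = tl b x + tl b y.
Proof. by move=> hb; rewrite tl_pi // tsum_cat. Qed.
Lemma tl_zero (U : lmodType k) (b : V -> W -> U) : bilin b -> tl b tzero = 0.
Proof. by move=> hb; rewrite tl_pi // /tsum big_nil. Qed.
Lemma tl_scale (U : lmodType k) (b : V -> W -> U) c x : bilin b -> tl b (tscale c x) = c *: tl b x.
Proof. by move=> hb; rewrite tl_pi // tsum_scale. Qed.
Lemma tl_opp (U : lmodType k) (b : V -> W -> U) x : bilin b -> tl b (topp x) = - tl b x.
Proof. by move=> hb; rewrite tl_scale // scaleN1r. Qed.
Lemma taddA : associative tadd.
Proof. by move=> x y z; apply: tensor_ext => U b hb; rewrite !tl_add // addrA. Qed.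
Lemma taddC : commutative tadd.
Proof. by move=> x y; apply: tensor_ext => U b hb; rewrite !tl_add // addrC. Qed.
Lemma tadd0 : left_id tzero tadd.
Proof. by move=> x; apply: tensor_ext => U b hb; rewrite !tl_add // tl_zero // add0r. Qed.
Lemma taddN : left_inverse tzero topp tadd.
Proof. by move=> x; apply: tensor_ext => U b hb; rewrite !tl_add // tl_opp // tl_zero // addNr. Qed.
HB.instance Definition _ := GRing.isZmodule.Build tensor taddA taddC tadd0 taddN.
Lemma tscaleA a b v : tscale a (tscale b v) = tscale (a * b) v.
Proof. by apply: tensor_ext => U f hf; rewrite !tl_scale // scalerA. Qed.
Lemma tscale1 : left_id 1 tscale.
Proof. by move=> x; apply: tensor_ext => U f hf; rewrite !tl_scale // scale1r. Qed.
Lemma tscaleDr : right_distributive tscale +%R.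
Proof. by move=> a x y; apply: tensor_ext => U f hf; rewrite !(tl_scale, tl_add) // scalerDr. Qed.
Lemma tscaleDl v : {morph tscale^~ v : a b / a + b}.
Proof. by move=> a b; apply: tensor_ext => U f hf; rewrite !(tl_scale, tl_add) // scalerDl. Qed.
HB.instance Definition _ := GRing.Zmodule_isLmodule.Build k tensor tscaleA tscale1 tscaleDr tscaleDl.
Definition tm (v : V) (w : W) : tensor := tmk [:: (1, (v, w))].
Lemma tl_tm (U : lmodType k) (b : V -> W -> U) v w : bilin b -> tl b (tm v w) = b v w.
Proof. by move=> hb; rewrite tl_pi // /tsum big_seq1 scale1r. Qed.
Lemma tl_lin (U : lmodType k) (b : V -> W -> U) : bilin b -> lin (tl b).
Proof.
by move=> hb a x y; rewrite -[a *: x + y]/(tadd (tscale a x) y) tl_add // tl_scale.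
Qed.
Lemma tm_bilin : bilin tm.
Proof.
split=> [w|v] a x y; apply: tensor_ext => U b hb.
  rewrite -[a *: tm x w + _]/(tadd (tscale a (tm x w)) (tm y w)) tl_add // tl_scale // !tl_tm //.
  by case: hb => h _; apply: h.
rewrite -[a *: tm v x + _]/(tadd (tscale a (tm v x)) (tm v y)) tl_add // tl_scale // !tl_tm //.
by case: hb => _ h; apply: h.
Qed.
End Tensor.

Section EqSub.
Variables (k : fieldType) (V W : lmodType k) (f g : V -> W).
Variables (hf : lin f) (hg : lin g).
Definition eqsub_of of lin f & lin g := {x : V | `[< f x = g x >]}.
Local Notation eqsub := (eqsub_of hf hg).
HB.instance Definition _ := Choice.on eqsub.
Lemma lin0 (h : V -> W) : lin h -> h 0 = 0.
Proof.
move=> hh; have e := hh 1 0 0; rewrite !scale1r addr0 in e.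
by apply: (addrI (h 0)); rewrite addr0 -e.
Qed.
Lemma eqsub_comb (a : k) (x y : V) :
  `[< f x = g x >] -> `[< f y = g y >] -> `[< f (a *: x + y) = g (a *: x + y) >].
Proof. by move=> /asboolP ex /asboolP ey; apply/asboolP; rewrite hf hg ex ey. Qed.
Lemma eqsub0 : `[< f 0 = g 0 >].
Proof. by apply/asboolP; rewrite !lin0. Qed.
Definition es0 : eqsub := exist _ 0 eqsub0.
Definition esc (a : k) (x y : eqsub) : eqsub :=
  exist _ (a *: val x + val y) (eqsub_comb a (valP x) (valP y)).
Definition esadd (x y : eqsub) := esc 1 x y.
Definition esscale (a : k) (x : eqsub) := esc a x es0.
Definition esopp (x : eqsub) := esscale (-1) x.
Lemma esaddA : associative esadd.
Proof. by move=> x y z; apply: val_inj; rewrite /= !scale1r addrA. Qed.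
Lemma esaddC : commutative esadd.
Proof. by move=> x y; apply: val_inj; rewrite /= !scale1r addrC. Qed.
Lemma esadd0 : left_id es0 esadd.
Proof. by move=> x; apply: val_inj; rewrite /= scaler0 add0r. Qed.
Lemma esaddN : left_inverse es0 esopp esadd.
Proof. by move=> x; apply: val_inj; rewrite /= scale1r addr0 scaleN1r addNr. Qed.
HB.instance Definition _ := GRing.isZmodule.Build eqsub esaddA esaddC esadd0 esaddN.
Lemma esscaleA a b v : esscale a (esscale b v) = esscale (a * b) v.
Proof. by apply: val_inj; rewrite /= !addr0 scalerA. Qed.
Lemma esscale1 : left_id 1 esscale.
Proof. by move=> x; apply: val_inj; rewrite /= addr0 scale1r. Qed.
Lemma esscaleDr : right_distributive esscale +%R.
Proof. by move=> a x y; apply: val_inj; rewrite /= !addr0 !scale1r scalerDr. Qed.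
Lemma esscaleDl v : {morph esscale^~ v : a b / a + b}.
Proof. by move=> a b; apply: val_inj; rewrite /= !addr0 !scale1r scalerDl. Qed.
HB.instance Definition _ := GRing.Zmodule_isLmodule.Build k eqsub esscaleA esscale1 esscaleDr esscaleDl.
End EqSub.

(* Dual quasi-bialgebras (Sweedler notation is encoded with tl: for   *)
(* a bilinear f, tl f (D h) = sum f h_1 h_2).                          *)
Section DQB.
Variables (k : fieldType) (H : lmodType k).
Variables (D : H -> tensor H H) (e : H -> k) (m : H -> H -> H) (u : H).
Variables (w wi : H -> H -> H -> k).

Definition slin (V : lmodType k) (f : V -> k) :=
  forall (a : k) (x y : V), f (a *: x + y) = a * f x + f y.
Definition strilin (f : H -> H -> H -> k) :=
  (forall y z, slin (fun x => f x y z)) /\ (forall x z, slin (fun y => f x y z))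
  /\ (forall x y, slin (fun z => f x y z)).

Definition sw (U : lmodType k) (f : H -> H -> U) (h : H) : U := tl f (D h).
Definition ssw (f : H -> H -> k) (h : H) : k := @tl k H H k^o f (D h).
Definition sw3 (U : lmodType k) (f : H -> H -> H -> U) (h : H) : U :=
  sw (fun a b => sw (fun b1 b2 => f a b1 b2) b) h.
Definition ssw3 (f : H -> H -> H -> k) (h : H) : k :=
  ssw (fun a b => ssw (fun b1 b2 => f a b1 b2) b) h.

Definition conv3 (f g : H -> H -> H -> k) (x y z : H) : k :=
  ssw (fun x1 x2 => ssw (fun y1 y2 => ssw (fun z1 z2 =>
    f x1 y1 z1 * g x2 y2 z2) z) y) x.

Definition is_dqb : Prop :=
  [/\
    [/\ lin D, slin e,
      (forall h, sw (fun a b => sw (fun a1 a2 => tm a1 (tm a2 b)) a) h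
                 = sw (fun a b => tm a (D b)) h),
      (forall h, sw (fun a b => e a *: b) h = h) &
      (forall h, sw (fun a b => e b *: a) h = h)],
    [/\ bilin m,
      (forall h l, D (m h l) = sw (fun h1 h2 => sw (fun l1 l2 => tm (m h1 l1) (m h2 l2)) l) h),
      (forall h l, e (m h l) = e h * e l),
      D u = tm u u /\ e u = 1 &
      (forall h, m u h = h /\ m h u = h)],
    [/\ strilin w, strilin wi,
      (forall x y z, conv3 w wi x y z = e x * e y * e z),
      (forall x y z, conv3 wi w x y z = e x * e y * e z) &
      (forall x y, w u x y = e u * e x * e y /\ w x u y = e x * e u * e y
                   /\ w x y u = e x * e y * e u)],
    (forall h g l n,
      ssw (fun h1 h2 => ssw (fun g1 g2 => ssw (fun l1 l2 => ssw (fun n1 n2 =>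
        w h1 g1 (m l1 n1) * w (m h2 g2) l2 n2) n) l) g) h
      = ssw (fun h1 h2 => ssw3 (fun g1 g2 g3 => ssw3 (fun l1 l2 l3 => ssw (fun n1 n2 =>
        w g1 l1 n1 * w h1 (m g2 l2) n2 * w h2 g3 l3) n) l) g) h) &
    (forall h g l,
      sw (fun h1 h2 => sw (fun g1 g2 => sw (fun l1 l2 =>
        w h2 g2 l2 *: m h1 (m g1 l1)) l) g) h
      = sw (fun h1 h2 => sw (fun g1 g2 => sw (fun l1 l2 =>
        w h1 g1 l1 *: m (m h2 g2) l2) l) g) h)].
End DQB.

Record dqbialg (k : fieldType) := DQBialg {
  dq_car :> lmodType k;
  dq_D : dq_car -> tensor dq_car dq_car;
  dq_e : dq_car -> k;
  dq_m : dq_car -> dq_car -> dq_car;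
  dq_u : dq_car;
  dq_w : dq_car -> dq_car -> dq_car -> k;
  dq_wi : dq_car -> dq_car -> dq_car -> k;
  dq_ax : is_dqb dq_D dq_e dq_m dq_u dq_w dq_wi }.

Section Comodules.
Variables (k : fieldType) (H : dqbialg k).
Local Notation HH := (@dq_car _ H).
Local Notation D := (@dq_D _ H).
Local Notation e := (@dq_e _ H).
Local Notation m := (@dq_m _ H).
Local Notation u := (@dq_u _ H).
Local Notation w := (@dq_w _ H).
Local Notation wi := (@dq_wi _ H).
Local Notation sw := (sw D).
Local Notation sw3 := (sw3 D).

Definition is_lcomod (V : lmodType k) (rl : V -> tensor HH V) : Prop :=
  [/\ lin rl,
    (forall x, tl (fun a v => sw (fun a1 a2 => tm a1 (tm a2 v)) a) (rl x)
               = tl (fun a v => tm a (rl v)) (rl x)) &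
    (forall x, tl (fun a v => e a *: v) (rl x) = x)].

Definition is_rcomod (V : lmodType k) (rr : V -> tensor V HH) : Prop :=
  [/\ lin rr,
    (forall x, tl (fun v a => sw (fun a1 a2 => tm (tm v a1) a2) a) (rr x)
               = tl (fun v a => tm (rr v) a) (rr x)) &
    (forall x, tl (fun v a => e a *: v) (rr x) = x)].

Record lcomod := LComod {
  lc_car :> lmodType k;
  lc_rho : lc_car -> tensor HH lc_car;
  lc_ax : is_lcomod lc_rho }.

Definition is_dqhbimod (M : lmodType k) (rl : M -> tensor HH M) (rr : M -> tensor M HH)
    (act : M -> H -> M) : Prop :=
  [/\ is_lcomod rl, is_rcomod rr,
    (forall x, tl (fun a v => tl (fun v0 b => tm (tm a v0) b) (rr v)) (rl x)
               = tl (fun v b => tm (rl v) b) (rr x)),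
    [/\ bilin act,
      (forall x h, rl (act x h)
         = tl (fun a x0 => sw (fun h1 h2 => tm (m a h1) (act x0 h2)) h) (rl x)) &
      (forall x h, rr (act x h)
         = tl (fun x0 a => sw (fun h1 h2 => tm (act x0 h1) (m a h2)) h) (rr x))] &
    (forall x, act x u = x) /\
    (forall x h l, act (act x h) l
       = tl (fun a x' => tl (fun x0 b => sw3 (fun h1 h2 h3 => sw3 (fun l1 l2 l3 =>
            (wi a h1 l1 * w b h3 l3) *: act x0 (m h2 l2)) l) h) (rr x')) (rl x))].

Record dqhbimod := DQHBimod {
  bm_car :> lmodType k;
  bm_l : bm_car -> tensor HH bm_car;
  bm_r : bm_car -> tensor bm_car H;
  bm_act : bm_car -> H -> bm_car;
  bm_rlin : lin bm_r;
  bm_ax : is_dqhbimod bm_l bm_r bm_act }.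

Lemma tm_lin1 (V W : lmodType k) (y : W) : lin (fun x : V => tm x y).
Proof. by case: (tm_bilin V W) => h _; apply: h. Qed.

Definition coinv (M : dqhbimod) : lmodType k :=
  eqsub_of (@bm_rlin M) (@tm_lin1 M HH u).

Definition adj_unit (N : lcomod) (n : N) : tensor N H := tm n u.
Definition FN_rcoact (N : lcomod) : tensor N H -> tensor (tensor N HH) H :=
  tl (fun n h => sw (fun h1 h2 => tm (tm n h1) h2) h).
Definition adj_counit (M : dqhbimod) : tensor (coinv M) HH -> M :=
  tl (fun (x : coinv M) h => bm_act (val x) h).

(* (i) : the adjunction (F, G) is an equivalence: every component of the
   unit and of the counit is an isomorphism (i.e. bijective) *)
Definition adj_equivalence : Prop :=
  (forall N : lcomod,
     injective (@adj_unit N) /\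
     (forall x : tensor N H, FN_rcoact x = tm x u -> exists n, adj_unit n = x))
  /\ (forall M : dqhbimod, bijective (@adj_counit M)).

Definition cond_ii : Prop :=
  forall M : dqhbimod, exists tau : M -> coinv M,
    [/\ lin tau,
      (forall (x : M) (h : HH), val (tau (bm_act x h))
         = tl (fun x0 x1 => tl (fun a y => wi a x1 h *: y) (bm_l (val (tau x0)))) (bm_r x)),
      (forall x : M, tl (fun a x0 => tm a (val (tau x0))) (bm_l x)
         = tl (fun x0 x1 => tl (fun a y => tm (m a x1) y) (bm_l (val (tau x0)))) (bm_r x)) &
      (forall x : M, tl (fun x0 x1 => bm_act (val (tau x0)) x1) (bm_r x) = x)].

Definition cond_iii : Prop :=
  forall M : dqhbimod, exists tau : M -> coinv M,
    [/\ lin tau,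
      (forall x : M, tl (fun x0 x1 => bm_act (val (tau x0)) x1) (bm_r x) = x) &
      (forall (x : M) (h : HH), bm_r x = tm x u -> val (tau (bm_act x h)) = e h *: x)].
End Comodules.

(* The unit n |-> n (x) 1 of the adjunction is always bijective, with inverse given by
   id (x) e on coinvariants, so everything hinges on the counit x (x) h |-> x h.  A map tau
   with tau(m_0) m_1 = m and tau(x h) = e(h) x on coinvariants x gives the inverse
   m |-> tau(m_0) (x) m_1 of the counit; conversely (id (x) e) composed with the inverse of
   the counit is such a tau.  For (iii) => (ii), the commutation of the two coactions on a
   coinvariant y, together with tau(m_0) m_1 = m, yields y_-1 (x) tau(y_0) = y_-1 (x) y_0;
   writing m = tau(m_0) m_1 and expanding (tau(m_0) m_1) h by the quasi-associativity of the
   action, every factor except omega^-1 is then absorbed by the counit.  For (ii) => (iii)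
   it suffices that omega^-1(a (x) 1 (x) h) = e(a) e(h). *)
From HB Require Import structures.
From mathcomp Require Import all_boot all_algebra.
From mathcomp Require Import boolp.
From mathcomp Require Import ring.
Set Implicit Arguments. Unset Strict Implicit. Unset Printing Implicit Defensive.
Import GRing.Theory.
Local Open Scope ring_scope.

Section Linear.
Variable k : fieldType.

Lemma linZ (V W : lmodType k) (L : V -> W) c x : lin L -> L (c *: x) = c *: L x.
Proof. by move=> hL; rewrite -[c *: x]addr0 hL lin0 // addr0. Qed.

Lemma lin_id (V : lmodType k) : lin (fun v : V => v). Proof. by []. Qed.

Lemma lin_comp (X V W : lmodType k) (f : V -> W) (g : X -> V) :
  lin f -> lin g -> lin (fun v => f (g v)).
Proof. by move=> hf hg c x y; rewrite hg hf. Qed.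

Lemma lin_scaler (X W : lmodType k) c (g : X -> W) : lin g -> lin (fun v => c *: g v).
Proof. by move=> hg a x y; rewrite hg scalerDr !scalerA mulrC. Qed.

Lemma lin_scalel (X W : lmodType k) (s : X -> k) (y : W) : slin s -> lin (fun v => s v *: y).
Proof. by move=> hs a x z; rewrite hs scalerDl scalerA. Qed.

Lemma slin_lin (X : lmodType k) (s : X -> k) : slin s -> @lin k X k^o s.
Proof. by []. Qed.

Lemma slin_comp (X V : lmodType k) (s : V -> k) (g : X -> V) :
  slin s -> lin g -> slin (fun v => s (g v)).
Proof. by move=> hs hg a x y; rewrite hg hs. Qed.

Lemma slin_mull (X : lmodType k) c (s : X -> k) : slin s -> slin (fun v => c * s v).
Proof. by move=> hs a x y; rewrite hs mulrDr mulrCA. Qed.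

Lemma slin_mulr (X : lmodType k) c (s : X -> k) : slin s -> slin (fun v => s v * c).
Proof. by move=> hs a x y; rewrite hs mulrDl mulrA. Qed.

Lemma bilin_linl (X V W U : lmodType k) (f : V -> W -> U) (L : X -> V) y :
  bilin f -> lin L -> lin (fun v => f (L v) y).
Proof. by move=> [hf _]; apply: (lin_comp (f := fun x => f x y)). Qed.

Lemma bilin_linr (X V W U : lmodType k) (f : V -> W -> U) (L : X -> W) x :
  bilin f -> lin L -> lin (fun v => f x (L v)).
Proof. by move=> [_ hf]; apply: (lin_comp (f := fun y => f x y)). Qed.

Lemma eq_tl (V W U : lmodType k) (f g : V -> W -> U) x :
  (forall a b, f a b = g a b) -> tl f x = tl g x.
Proof. by move=> h; rewrite /tl /tsum; apply: eq_bigr => z _; rewrite h. Qed.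

Lemma linear_tl (V W U U' : lmodType k) (L : U -> U') (f : V -> W -> U) x :
  lin L -> L (tl f x) = tl (fun a b => L (f a b)) x.
Proof.
move=> hL; rewrite /tl /tsum; elim: (repr x) => [|z s IH]; first by rewrite !big_nil lin0.
by rewrite !big_cons hL IH.
Qed.

Lemma lin_tl_param (X V W U : lmodType k) (F : X -> V -> W -> U) x :
  (forall a b, lin (fun v => F v a b)) -> lin (fun v => tl (F v) x).
Proof.
move=> hF c v1 v2; rewrite /tl /tsum; elim: (repr x) => [|z s IH].
  by rewrite !big_nil scaler0 addr0.
by rewrite !big_cons IH hF !scalerDr !scalerA mulrC addrACA.
Qed.

Lemma lin_tl_comp (X V W U : lmodType k) (f : V -> W -> U) (g : X -> tensor V W) :
  bilin f -> lin g -> lin (fun v => tl f (g v)).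
Proof. by move=> hf hg c x y; rewrite hg tl_lin. Qed.

Lemma tm_linl (V W : lmodType k) (w : W) : lin (fun v : V => tm v w).
Proof. by case: (tm_bilin V W). Qed.

Lemma tm_linr (V W : lmodType k) (v : V) : lin (@tm k V W v).
Proof. by case: (tm_bilin V W) => _; apply. Qed.

Lemma tmZl (V W : lmodType k) c (v : V) (w : W) : tm (c *: v) w = c *: tm v w.
Proof. exact/(linZ (L := fun y => tm y w))/tm_linl. Qed.

Lemma tl_tm_id (V W : lmodType k) (x : tensor V W) : tl (@tm k V W) x = x.
Proof.
apply: tensor_ext => U b hb; rewrite linear_tl; last exact: tl_lin.
by apply: eq_tl => a c; rewrite tl_tm.
Qed.

Lemma tensor_lin_ext (V W U : lmodType k) (L1 L2 : tensor V W -> U) :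
  lin L1 -> lin L2 -> (forall v w, L1 (tm v w) = L2 (tm v w)) -> forall x, L1 x = L2 x.
Proof. by move=> h1 h2 h x; rewrite -[x]tl_tm_id !linear_tl //; apply: eq_tl. Qed.
End Linear.

Section DualQuasiBialgebra.
Variables (k : fieldType) (H : dqbialg k).
Local Notation HH := (@dq_car _ H).
Local Notation D := (@dq_D _ H).
Local Notation e := (@dq_e _ H).
Local Notation m := (@dq_m _ H).
Local Notation u := (@dq_u _ H).
Local Notation w := (@dq_w _ H).
Local Notation wi := (@dq_wi _ H).

Lemma dq_Dlin : lin D. Proof. by case: (dq_ax H) => [[]]. Qed.
Lemma dq_eslin : slin e. Proof. by case: (dq_ax H) => [[]]. Qed.
Lemma dq_counitl h : sw D (fun a b => e a *: b) h = h. Proof. by case: (dq_ax H) => [[]]. Qed.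
Lemma dq_counitr h : sw D (fun a b => e b *: a) h = h. Proof. by case: (dq_ax H) => [[]]. Qed.
Lemma dq_mbilin : bilin m. Proof. by case: (dq_ax H) => _ []. Qed.
Lemma dq_eM h l : e (m h l) = e h * e l. Proof. by case: (dq_ax H) => _ []. Qed.
Lemma dq_Du : D u = tm u u. Proof. by case: (dq_ax H) => _ [_ _ _ []]. Qed.
Lemma dq_eu : e u = 1. Proof. by case: (dq_ax H) => _ [_ _ _ []]. Qed.
Lemma dq_mul1 h : m u h = h. Proof. by case: (dq_ax H) => _ [_ _ _ _ /(_ h) []]. Qed.
Lemma dq_wslin : strilin w. Proof. by case: (dq_ax H) => _ _ []. Qed.
Lemma dq_wislin : strilin wi. Proof. by case: (dq_ax H) => _ _ []. Qed.
Lemma dq_conv_wi_w x y z : conv3 D wi w x y z = e x * e y * e z.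
Proof. by case: (dq_ax H) => _ _ []. Qed.

Lemma dq_w1l x y : w u x y = e x * e y.
Proof. by case: (dq_ax H) => _ _ [_ _ _ _ /(_ x y) [-> _]]; rewrite dq_eu mul1r. Qed.

Lemma dq_w1m x y : w x u y = e x * e y.
Proof. by case: (dq_ax H) => _ _ [_ _ _ _ /(_ x y) [_ [-> _]]]; rewrite dq_eu mulr1. Qed.

Lemma eq_sw (U : lmodType k) (f g : HH -> HH -> U) h :
  (forall a b, f a b = g a b) -> sw D f h = sw D g h.
Proof. exact: eq_tl. Qed.

Lemma eq_sw3 (U : lmodType k) (f g : HH -> HH -> HH -> U) h :
  (forall a b c, f a b c = g a b c) -> sw3 D f h = sw3 D g h.
Proof. by move=> hf; apply: eq_tl => a b; apply: eq_tl. Qed.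

Lemma linear_sw (U U' : lmodType k) (L : U -> U') (f : HH -> HH -> U) h :
  lin L -> L (sw D f h) = sw D (fun a b => L (f a b)) h.
Proof. exact: linear_tl. Qed.

Lemma linear_sw3 (U U' : lmodType k) (L : U -> U') (f : HH -> HH -> HH -> U) h :
  lin L -> L (sw3 D f h) = sw3 D (fun a b c => L (f a b c)) h.
Proof. by move=> hL; rewrite /sw3 linear_sw //; apply: eq_sw => a b; rewrite linear_sw. Qed.

Lemma sw_counitl (U : lmodType k) (L : HH -> U) h :
  lin L -> sw D (fun a b => e a *: L b) h = L h.
Proof. by move=> hL; rewrite -{2}[h]dq_counitl linear_sw //; apply: eq_sw => a b; rewrite linZ. Qed.

Lemma sw_counitr (U : lmodType k) (L : HH -> U) h :
  lin L -> sw D (fun a b => e b *: L a) h = L h.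
Proof. by move=> hL; rewrite -{2}[h]dq_counitr linear_sw //; apply: eq_sw => a b; rewrite linZ. Qed.

Lemma ssw_counitr (s : HH -> k) h : slin s -> ssw D (fun a b => e b * s a) h = s h.
Proof. by move=> hs; apply: (@sw_counitr k^o s h (slin_lin hs)). Qed.

Lemma slin_e (X : lmodType k) (L : X -> HH) : lin L -> slin (fun v => e (L v)).
Proof. by move=> hL; apply: slin_comp => //; exact: dq_eslin. Qed.

Lemma sw3_counit (U : lmodType k) (s : HH -> k) (V : U) h :
  slin s -> sw3 D (fun l1 l2 l3 => (s l1 * e l2 * e l3) *: V) h = s h *: V.
Proof.
move=> hs; rewrite /sw3 (eq_sw (g := fun l1 b => e b *: (s l1 *: V))).
  by rewrite (sw_counitr (L := fun l1 => s l1 *: V)) //; apply: lin_scalel.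
move=> l1 b; rewrite (eq_sw (g := fun l2 l3 => e l2 *: ((s l1 * e l3) *: V))).
  rewrite (sw_counitl (L := fun l3 => (s l1 * e l3) *: V)); first by rewrite !scalerA mulrC.
  by apply/lin_scalel/slin_mull/slin_e.
by move=> l2 l3; rewrite scalerA; congr (_ *: _); ring.
Qed.

Lemma lin_ml (X : lmodType k) (L : X -> HH) b : lin L -> lin (fun v => m (L v) b).
Proof. exact/bilin_linl/dq_mbilin. Qed.
Lemma lin_mr (X : lmodType k) (L : X -> HH) a : lin L -> lin (fun v => m a (L v)).
Proof. exact/bilin_linr/dq_mbilin. Qed.
Lemma lin_D (X : lmodType k) (L : X -> HH) : lin L -> lin (fun v => D (L v)).
Proof. exact/lin_comp/dq_Dlin. Qed.
Lemma lin_tml (X V W : lmodType k) (L : X -> V) (b : W) : lin L -> lin (fun v => tm (L v) b).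
Proof. exact/bilin_linl/tm_bilin. Qed.
Lemma lin_tmr (X V W : lmodType k) (L : X -> W) (a : V) : lin L -> lin (fun v => tm a (L v)).
Proof. exact/bilin_linr/tm_bilin. Qed.
Lemma slin_w1 (X : lmodType k) (L : X -> HH) b c : lin L -> slin (fun v => w (L v) b c).
Proof. by apply: (slin_comp (s := fun x => w x b c)); case: dq_wslin. Qed.
Lemma slin_w2 (X : lmodType k) (L : X -> HH) a c : lin L -> slin (fun v => w a (L v) c).
Proof. by apply: (slin_comp (s := fun x => w a x c)); case: dq_wslin => _ []. Qed.
Lemma slin_w3 (X : lmodType k) (L : X -> HH) a b : lin L -> slin (fun v => w a b (L v)).
Proof. by apply: (slin_comp (s := fun x => w a b x)); case: dq_wslin => _ []. Qed.
Lemma slin_wi1 (X : lmodType k) (L : X -> HH) b c : lin L -> slin (fun v => wi (L v) b c).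
Proof. by apply: (slin_comp (s := fun x => wi x b c)); case: dq_wislin. Qed.
Lemma slin_wi2 (X : lmodType k) (L : X -> HH) a c : lin L -> slin (fun v => wi a (L v) c).
Proof. by apply: (slin_comp (s := fun x => wi a x c)); case: dq_wislin => _ []. Qed.
Lemma slin_wi3 (X : lmodType k) (L : X -> HH) a b : lin L -> slin (fun v => wi a b (L v)).
Proof. by apply: (slin_comp (s := fun x => wi a b x)); case: dq_wislin => _ []. Qed.

Section Bimodule.
Variable M : dqhbimod H.
Local Notation rl := (@bm_l _ H M).
Local Notation rr := (@bm_r _ H M).
Local Notation act := (@bm_act _ H M).

Lemma bm_llin : lin rl. Proof. by case: (bm_ax M) => [[]]. Qed.
Lemma bm_lcounit x : tl (fun a v => e a *: v) (rl x) = x. Proof. by case: (bm_ax M) => [[]]. Qed.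
Lemma bm_coactions_comm x : tl (fun a v => tl (fun v0 b => tm (tm a v0) b) (rr v)) (rl x)
                            = tl (fun v b => tm (rl v) b) (rr x).
Proof. by case: (bm_ax M). Qed.
Lemma bm_act_bilin : bilin act. Proof. by case: (bm_ax M) => _ _ _ []. Qed.
Lemma bm_l_act x h :
  rl (act x h) = tl (fun a x0 => sw D (fun h1 h2 => tm (m a h1) (act x0 h2)) h) (rl x).
Proof. by case: (bm_ax M) => _ _ _ []. Qed.
Lemma bm_r_act x h :
  rr (act x h) = tl (fun x0 a => sw D (fun h1 h2 => tm (act x0 h1) (m a h2)) h) (rr x).
Proof. by case: (bm_ax M) => _ _ _ []. Qed.
Lemma bm_act1 x : act x u = x. Proof. by case: (bm_ax M) => _ _ _ _ []. Qed.
Lemma bm_actA x h l : act (act x h) l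
  = tl (fun a x' => tl (fun x0 b => sw3 D (fun h1 h2 h3 => sw3 D (fun l1 l2 l3 =>
       (wi a h1 l1 * w b h3 l3) *: act x0 (m h2 l2)) l) h) (rr x')) (rl x).
Proof. by case: (bm_ax M) => _ _ _ _ []. Qed.

Lemma lin_actl (X : lmodType k) (L : X -> M) h : lin L -> lin (fun v => act (L v) h).
Proof. exact/bilin_linl/bm_act_bilin. Qed.
Lemma lin_actr (X : lmodType k) (L : X -> HH) x : lin L -> lin (fun v => act x (L v)).
Proof. exact/bilin_linr/bm_act_bilin. Qed.
Lemma lin_bml (X : lmodType k) (L : X -> M) : lin L -> lin (fun v => rl (L v)).
Proof. exact/lin_comp/bm_llin. Qed.
Lemma lin_bmr (X : lmodType k) (L : X -> M) : lin L -> lin (fun v => rr (L v)).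
Proof. exact/lin_comp/bm_rlin. Qed.
Lemma lin_val (X : lmodType k) (L : X -> coinv M) : lin L -> lin (fun v => val (L v)).
Proof. by apply: lin_comp => a x y /=; rewrite scale1r addr0. Qed.

Lemma coinvP (y : coinv M) : rr (val y) = tm (val y) u.
Proof. exact/asboolP/(valP y). Qed.

Lemma coinv_valZ (y : coinv M) c : val (c *: y) = c *: val y.
Proof. exact/(linZ (L := fun z : coinv M => val z))/lin_val/lin_id. Qed.
End Bimodule.
End DualQuasiBialgebra.

Ltac lin_auto := try rewrite /sw3; try rewrite /sw; first
  [ exact: lin_id
  | apply: lin_actl; lin_auto | apply: lin_actr; lin_auto
  | apply: lin_ml; lin_auto | apply: lin_mr; lin_auto
  | apply: lin_tml; lin_auto | apply: lin_tmr; lin_auto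
  | apply: lin_bml; lin_auto | apply: lin_bmr; lin_auto
  | apply: lin_val; lin_auto | apply: lin_D; lin_auto
  | apply: lin_scaler; lin_auto
  | apply: lin_scalel; slin_auto
  | solve [apply: lin_tl_comp; [bilin_auto | lin_auto]]
  | solve [apply: lin_tl_param => ? ?; lin_auto]
  | assumption
  | (apply: bilin_linl; [eassumption | lin_auto])
  | (apply: bilin_linr; [eassumption | lin_auto])
  | (apply: lin_comp; [eassumption | lin_auto]) ]
with slin_auto := first
  [ apply: slin_e; lin_auto
  | apply: slin_w1; lin_auto | apply: slin_w2; lin_auto | apply: slin_w3; lin_auto
  | apply: slin_wi1; lin_auto | apply: slin_wi2; lin_auto | apply: slin_wi3; lin_auto
  | apply: slin_mull; slin_auto | apply: slin_mulr; slin_auto ]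
with bilin_auto := split => ?; lin_auto.

Section Equivalence.
Variables (k : fieldType) (H : dqbialg k).
Local Notation HH := (@dq_car _ H).
Local Notation D := (@dq_D _ H).
Local Notation e := (@dq_e _ H).
Local Notation m := (@dq_m _ H).
Local Notation u := (@dq_u _ H).
Local Notation w := (@dq_w _ H).
Local Notation wi := (@dq_wi _ H).

(* e a e h = (wi * w)(a, u, h) = wi(a_1, u, h_1) w(a_2, u, h_2), and the normalisation
   of w turns the second factor into e(a_2) e(h_2). *)
Lemma dq_wi1m a h : wi a u h = e a * e h.
Proof.
have := dq_conv_wi_w a u h; rewrite dq_eu mulr1 => <-; rewrite /conv3.
transitivity (ssw D (fun x1 x2 => e x2 * wi x1 u h) a); first by rewrite ssw_counitr //; slin_auto.
rewrite /ssw; apply: (@eq_tl k HH HH k^o) => x1 x2; symmetry.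
rewrite dq_Du tl_tm; last by split=> ?; apply: lin_tl_param => ? ?; apply: slin_lin; slin_auto.
rewrite -(ssw_counitr (s := fun z1 => e x2 * wi x1 u z1)); last by slin_auto.
by apply: eq_tl => z1 z2; rewrite dq_w1m /=; ring.
Qed.

Lemma adj_unit_inj (N : lcomod H) : injective (@adj_unit _ H N).
Proof.
move=> x y /(congr1 (tl (fun (n : N) (h : HH) => e h *: n))).
by rewrite /adj_unit !tl_tm ?dq_eu ?scale1r //; bilin_auto.
Qed.

Lemma adj_unit_onto (N : lcomod H) (x : tensor N HH) :
  FN_rcoact x = tm x u -> exists n, adj_unit n = x.
Proof.
move=> hx; exists (tl (fun n h => e h *: n) x).
pose T := tl (fun (p : tensor N HH) (b : HH) => tl (fun n h1 => e h1 *: tm n b) p).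
have hT : lin T by apply: tl_lin; bilin_auto.
have T_coact : T (FN_rcoact x) = x.
  rewrite /FN_rcoact linear_tl // -[RHS]tl_tm_id; apply: eq_tl => n h.
  rewrite linear_sw // (eq_sw (g := fun h1 h2 => e h1 *: tm n h2)).
    exact/sw_counitl/tm_linr.
  by move=> a b; rewrite /T !tl_tm //; bilin_auto.
have T_tm : T (tm x u) = tl (fun n h => e h *: tm n u) x by rewrite /T tl_tm //; bilin_auto.
rewrite -{2}T_coact hx T_tm /adj_unit (linear_tl (L := fun y => tm y u)); last exact: tm_linl.
by apply: eq_tl => a b; rewrite tmZl.
Qed.

Lemma bm_r_act_coinv (M : dqhbimod H) (x : M) h :
  bm_r x = tm x u -> bm_r (bm_act x h) = sw D (fun h1 h2 => tm (bm_act x h1) h2) h.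
Proof.
move=> hx; rewrite bm_r_act hx tl_tm; last by bilin_auto.
by apply: eq_sw => a b; rewrite dq_mul1.
Qed.

Lemma adj_counit_lin (M : dqhbimod H) : lin (@adj_counit _ H M).
Proof. by apply: tl_lin; bilin_auto. Qed.

Lemma adj_counit_tm (M : dqhbimod H) (y : coinv M) h : adj_counit (tm y h) = bm_act (val y) h.
Proof. by rewrite /adj_counit tl_tm //; bilin_auto. Qed.

Section Tau.
Variables (M : dqhbimod H) (tau : M -> coinv M).
Local Notation rl := (@bm_l _ H M).
Local Notation rr := (@bm_r _ H M).
Local Notation act := (@bm_act _ H M).
Hypothesis tau_lin : lin tau.
Hypothesis tau_coact : forall x : M, tl (fun x0 x1 => act (val (tau x0)) x1) (rr x) = x.
Hypothesis tau_act_coinv :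
  forall (x : M) (h : HH), rr x = tm x u -> val (tau (act x h)) = e h *: x.

Lemma tau_act_val (y : coinv M) h : val (tau (act (val y) h)) = e h *: val y.
Proof. by rewrite tau_act_coinv // coinvP. Qed.

Lemma tauZ c x : val (tau (c *: x)) = c *: val (tau x).
Proof. by apply: (linZ (L := fun z => val (tau z))); lin_auto. Qed.

Lemma adj_counit_bij : bijective (@adj_counit _ H M).
Proof.
exists (fun x => tl (fun x0 x1 => tm (tau x0) x1) (rr x)); last first.
  move=> x; rewrite -{2}[x]tau_coact linear_tl; last exact: adj_counit_lin.
  by apply: eq_tl => a b; rewrite adj_counit_tm.
apply: (tensor_lin_ext (L2 := id)) => //.
  apply: (lin_comp (f := fun x => tl (fun x0 x1 => tm (tau x0) x1) (rr x))); last first.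
    exact: adj_counit_lin.
  by lin_auto.
move=> y h; rewrite adj_counit_tm bm_r_act_coinv ?coinvP // linear_sw; last by lin_auto.
rewrite (eq_sw (g := fun h1 h2 => e h1 *: tm y h2)); first exact/sw_counitl/tm_linr.
move=> a b; rewrite tl_tm; last by bilin_auto.
have -> : tau (act (val y) a) = e a *: y by apply: val_inj; rewrite tau_act_val coinv_valZ.
by rewrite tmZl.
Qed.

(* Apply a (x) x_0 (x) b |-> f(a, tau(x_0) b) to both sides of the commutation of the
   coactions on y; the right side is y_-1 (x) y_0 (x) 1 since y is coinvariant. *)
Lemma coaction_tau_coinv (U : lmodType k) (f : HH -> M -> U) (y : M) :
  bilin f -> rr y = tm y u -> tl f (rl y) = tl (fun a v => f a (val (tau v))) (rl y).
Proof.
move=> hf hy.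
have f_expand : tl f (rl y)
    = tl (fun a v => tl (fun x0 x1 => f a (act (val (tau x0)) x1)) (rr v)) (rl y).
  by apply: eq_tl => a v; rewrite -{1}[v]tau_coact linear_tl //; lin_auto.
pose T := tl (fun p b => tl (fun a v0 => f a (act (val (tau v0)) b)) p).
have hT : lin T by apply: tl_lin; bilin_auto.
have := congr1 T (bm_coactions_comm y).
rewrite hy tl_tm; last by bilin_auto.
rewrite /T tl_tm; last by bilin_auto.
rewrite linear_tl //.
rewrite (eq_tl (g := fun a v => tl (fun x0 x1 => f a (act (val (tau x0)) x1)) (rr v))).
  by rewrite -f_expand => ->; apply: eq_tl => a v; rewrite bm_act1.
move=> a v; rewrite linear_tl //; apply: eq_tl => v0 b.
by rewrite !tl_tm //; bilin_auto.
Qed.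

Lemma tau_colinear (x : M) : tl (fun a x0 => tm a (val (tau x0))) (rl x)
  = tl (fun x0 x1 => tl (fun a y => tm (m a x1) y) (rl (val (tau x0)))) (rr x).
Proof.
rewrite -{1}[x]tau_coact (linear_tl (L := rl)); last exact: bm_llin.
rewrite linear_tl; last by apply: tl_lin; bilin_auto.
apply: eq_tl => x0 x1; have tau_x0_coinv := coinvP (tau x0).
rewrite bm_l_act linear_tl; last by apply: tl_lin; bilin_auto.
rewrite [LHS]coaction_tau_coinv //; last by bilin_auto.
rewrite [RHS]coaction_tau_coinv //; last by bilin_auto.
apply: eq_tl => a v; rewrite linear_sw; last by apply: tl_lin; bilin_auto.
rewrite (eq_sw (g := fun h1 h2 => e h2 *: tm (m a h1) (val (tau v)))).
  by rewrite (sw_counitr (L := fun h => tm (m a h) (val (tau v)))) //; lin_auto.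
move=> b c; rewrite tl_tm; last by bilin_auto.
by rewrite tau_act_val linZ //; apply: tm_linr.
Qed.

Lemma tau_act (x : M) (h : HH) : val (tau (act x h))
  = tl (fun x0 x1 => tl (fun a y => wi a x1 h *: y) (rl (val (tau x0)))) (rr x).
Proof.
have -> : act x h = tl (fun x0 x1 => act (act (val (tau x0)) x1) h) (rr x).
  by rewrite -(linear_tl (L := fun z => act z h)) ?tau_coact //; lin_auto.
rewrite (linear_tl (L := fun z => val (tau z))); last by lin_auto.
apply: eq_tl => x0 x1; have tau_x0_coinv := coinvP (tau x0).
rewrite bm_actA (linear_tl (L := fun z => val (tau z))); last by lin_auto.
rewrite [LHS]coaction_tau_coinv //; last by bilin_auto.
rewrite [RHS]coaction_tau_coinv //; last by bilin_auto.
apply: eq_tl => a v; rewrite coinvP tl_tm; last by bilin_auto.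
set V := val (tau v).
rewrite (linear_sw3 (L := fun z => val (tau z))); last by lin_auto.
rewrite -(sw3_counit (s := fun h1 => wi a h1 h)) //; last by slin_auto.
apply: eq_sw3 => b1 b2 b3.
rewrite (linear_sw3 (L := fun z => val (tau z))); last by lin_auto.
rewrite -mulrA -(sw3_counit (s := fun l1 => wi a b1 l1 * (e b2 * e b3))); last by slin_auto.
apply: eq_sw3 => l1 l2 l3.
by rewrite tauZ tau_act_val dq_w1l dq_eM scalerA; congr (_ *: _); ring.
Qed.
End Tau.

Lemma cond_iii_adj_equivalence : cond_iii H -> adj_equivalence H.
Proof.
move=> h3; split=> [N | M]; first by split; [exact: adj_unit_inj | exact: adj_unit_onto].
by have [tau [tau_lin tau_coact tau_act_coinv]] := h3 M; exact: adj_counit_bij.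
Qed.

Lemma cond_iii_cond_ii : cond_iii H -> cond_ii H.
Proof.
move=> h3 M; have [tau [tau_lin tau_coact tau_act_coinv]] := h3 M.
by exists tau; split=> // [x h | x]; [exact: tau_act | exact: tau_colinear].
Qed.

Lemma cond_ii_cond_iii : cond_ii H -> cond_iii H.
Proof.
move=> h2 M; have [tau [tau_lin tau_act_wi _ tau_coact]] := h2 M.
have tau_coinv x : bm_r x = tm x u -> val (tau x) = x.
  by move=> hx; have := tau_coact x; rewrite hx tl_tm ?bm_act1 //; bilin_auto.
exists tau; split=> // x h hx.
rewrite tau_act_wi hx tl_tm; last by bilin_auto.
rewrite (eq_tl (g := fun a y => e h *: (e a *: y))); last first.
  by move=> a y; rewrite dq_wi1m scalerA mulrC.
by rewrite -(linear_tl (L := fun y => e h *: y)) ?bm_lcounit ?tau_coinv //; lin_auto.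
Qed.

Lemma adj_equivalence_cond_iii : adj_equivalence H -> cond_iii H.
Proof.
move=> [_ counit_bij] M; have [g counitK gK] := counit_bij M.
have g_lin : lin g by move=> c x y; apply: (can_inj counitK); rewrite adj_counit_lin !gK.
pose tau x := tl (fun (y : coinv M) (h : HH) => e h *: y) (g x).
have tau_act_val (y : coinv M) h : tau (bm_act (val y) h) = e h *: y.
  by rewrite /tau -adj_counit_tm counitK tl_tm //; bilin_auto.
exists tau; split.
- by rewrite /tau; lin_auto.
- move=> x; rewrite -[RHS]gK -{1}(gK x) /adj_counit.
  rewrite (linear_tl (L := @bm_r _ H M)); last exact: bm_rlin.
  rewrite linear_tl; last by apply: tl_lin; bilin_auto.
  apply: eq_tl => y h; rewrite bm_r_act_coinv ?coinvP // linear_sw; last first.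
    by apply: tl_lin; bilin_auto.
  rewrite (eq_sw (g := fun h1 h2 => e h1 *: bm_act (val y) h2)).
    by rewrite sw_counitl //; lin_auto.
  move=> a b; rewrite tl_tm; last by bilin_auto.
  by rewrite tau_act_val coinv_valZ; apply: (linZ (L := fun z => bm_act z b)); lin_auto.
- move=> x h hx.
  pose y : coinv M := exist (fun z => `[< bm_r z = tm z u >]) x (asboolT hx).
  by rewrite -[x]/(val y) tau_act_val coinv_valZ.
Qed.
End Equivalence.

Theorem proposition3p3 (k : fieldType) (H : dqbialg k) :
  (adj_equivalence H <-> cond_ii H) /\ (cond_ii H <-> cond_iii H).
Proof.
split; split.
- by move/adj_equivalence_cond_iii/cond_iii_cond_ii.
- by move/cond_ii_cond_iii/cond_iii_adj_equivalence.
- exact: cond_ii_cond_iii.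
- exact: cond_iii_cond_ii.
Qed.
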